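(* Let $R\subset S$ be an FCP ring extension with Loewy series $\{S_i\}_{i=0}^n$, and let $T\in[R,S]$, $T\neq R,S$, be such that $\mathrm{Supp}_R(T/R)\cap\mathrm{Supp}_R(S/T)=\emptyset$. Then: (1) $T$ has a unique complement $U\in[R,S]$, i.e. a unique $U$ with $T\cap U=R$ and $TU=S$. (2) Let $\{T_i\}_{i=0}^m$ and $\{U_i\}_{i=0}^r$ be the Loewy series of $R\subseteq T$ and $R\subseteq U$ respectively. Then $S_i=T_iU_i$ for each $i\in\{0,\ldots,n\}$, and $n=\pounds[R,S]=\sup(\pounds[R,T],\pounds[R,U])=\sup(m,r)$.
   Context: All rings are commutative with identity. $[R,S]$ is the lattice of $R$-subalgebras of $S$ (meet = intersection, join = product). FCP: every chain in $[R,S]$ is finite. $T\subset U$ minimal means $[T,U]=\{T,U\}$; atoms of $[A,B]$ are $C$ with $A\subset C$ minimal; the socle $\mathcal S[A,B]$ is the product of all atoms of $[A,B]$. The Loewy series of $A\subseteq B$: $S_0=A$, $S_{i+1}=\mathcal S[S_i,B]$ while $S_i\neq B$, and $\pounds[A,B]$ is the least $n$ with $S_n=B$; by convention the terms of a Loewy series beyond its length are all equal to its top (e.g. $T_i=T$ for $i\geq m$ and $U_i=U$ for $i\geq r$). $\mathrm{Supp}_R(E)$ is the set of primes $P$ of $R$ with $E_P\neq 0$. *)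

From mathcomp Require Import all_boot all_algebra.
From Stdlib Require List.
Set Implicit Arguments. Unset Strict Implicit. Unset Printing Implicit Defensive.
Import GRing.Theory.
Local Open Scope ring_scope.

Section Defs.
Variable S : comNzRingType.

Definition subS (A B : S -> Prop) : Prop := forall x, A x -> B x.
Definition fullS : S -> Prop := (fun _ : S => True).

Definition is_subring (A : S -> Prop) : Prop :=
  [/\ A 1, (forall x y, A x -> A y -> A (x - y)) &
      (forall x y, A x -> A y -> A (x * y))].

Definition in_interval (A B C : S -> Prop) : Prop :=
  [/\ is_subring C, subS A C & subS C B].

Definition gen (X : S -> Prop) : S -> Prop :=
  fun x => forall D, is_subring D -> subS X D -> D x.

Definition prodR (T U : S -> Prop) : S -> Prop :=
  gen (fun x => T x \/ U x).

Definition capR (T U : S -> Prop) : S -> Prop := fun x => T x /\ U x.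

Definition FCP (A B : S -> Prop) : Prop :=
  forall Ch : (S -> Prop) -> Prop,
    (forall C, Ch C -> in_interval A B C) ->
    (forall C D, Ch C -> Ch D -> subS C D \/ subS D C) ->
    exists l : list (S -> Prop), forall C, Ch C -> List.In C l.

Definition minimal_ext (A C : S -> Prop) : Prop :=
  [/\ is_subring A, is_subring C, subS A C, A <> C &
      forall D, in_interval A C D -> D = A \/ D = C].

Definition atom (A B C : S -> Prop) : Prop :=
  in_interval A B C /\ minimal_ext A C.

(* socle of [A,B]: product of all atoms (as A-algebras; equal to A if there are none) *)
Definition socle (A B : S -> Prop) : S -> Prop :=
  gen (fun x => A x \/ exists C, atom A B C /\ C x).

(* Loewy series of A ⊆ B; terms beyond the length are equal to B
   (socle B B = B for a subring B) *)
Fixpoint loewy (A B : S -> Prop) (i : nat) : S -> Prop :=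
  match i with
  | 0 => A
  | i.+1 => socle (loewy A B i) B
  end.

Definition loewy_length (A B : S -> Prop) (n : nat) : Prop :=
  loewy A B n = B /\ forall k, loewy A B k = B -> (n <= k)%N.

Definition prime_ideal_of (R P : S -> Prop) : Prop :=
  [/\ subS P R, P 0, (forall x y, P x -> P y -> P (x - y)),
      (forall a x, R a -> P x -> P (a * x)) &
      ~ P 1 /\ (forall a b, R a -> R b -> P (a * b) -> P a \/ P b)].

(* P ∈ Supp_R(B/A) for R-modules A ⊆ B (R ⊆ A): (B/A)_P <> 0, i.e. some
   class [x] (x ∈ B) is not killed by any s ∈ R \ P. *)
Definition in_supp (R A B P : S -> Prop) : Prop :=
  prime_ideal_of R P /\
  exists x, B x /\ forall s, R s -> ~ P s -> ~ A (s * x).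

End Defs.

(** Let U be the set of w ∈ S such that, for every z ∈ T, the conductors
    (R :_R w) and (R :_R z) are comaximal in R: locally on Spec R, w or z lies
    in R.  A partition of unity shows that XY ∩ T = X and XY ∩ U = Y for
    X ∈ [R,T] and Y ∈ [R,U].  By FCP, T is generated over R by finitely many
    ys; if (T :_R x) + (R :_R ys) were proper for some x ∈ S, a prime above it
    would lie both in Supp(S/T) and in Supp(T/R).  Hence 1 = u + m with
    u x ∈ T and m^K T ⊆ R for large K, and x = a u x + m^K x is the sum of an
    element of C ∩ T and one of C ∩ U whenever x ∈ C ∈ [R,S].  So
    C ↦ (C ∩ T, C ∩ U) identifies [R,S] with [R,T] × [R,U]; the atoms of a
    product of lattices are the atoms of one factor paired with the bottom of
    the other, so socles and then Loewy series split as products, and U is the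
    only complement of T. *)

From mathcomp Require Import all_boot all_algebra.
From mathcomp Require Import boolp classical_sets ring.
From Stdlib Require List.
Set Implicit Arguments. Unset Printing Implicit Defensive.
Import GRing.Theory.
Local Open Scope ring_scope.
Local Open Scope classical_set_scope.

Section LoewySplitting.
Context {S : comNzRingType}.
Implicit Types A B C D E X Y R T U : S -> Prop.
Local Notation full := (@fullS S).

Lemma subS_anti A B : subS A B -> subS B A -> A = B.
Proof. by move=> AB BA; apply/seteqP; split. Qed.

Section SubringClosure.
Variable A : S -> Prop.
Hypothesis sA : is_subring A.

Lemma subring1 : A 1. Proof. by case: sA. Qed.
Lemma subringB x y : A x -> A y -> A (x - y). Proof. by case: sA => _ + _; apply. Qed.
Lemma subringM x y : A x -> A y -> A (x * y). Proof. by case: sA => _ _; apply. Qed.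
Lemma subring0 : A 0. Proof. by rewrite -(subrr 1); apply: subringB; apply: subring1. Qed.

Lemma subringN x : A x -> A (- x).
Proof. by move=> Ax; rewrite -sub0r; apply: subringB Ax; apply: subring0. Qed.

Lemma subringD x y : A x -> A y -> A (x + y).
Proof. by move=> Ax Ay; rewrite -[y]opprK; apply: subringB Ax _; apply: subringN. Qed.

Lemma subringX x k : A x -> A (x ^+ k).
Proof.
by move=> Ax; elim: k => [|k IH]; [rewrite expr0; apply: subring1 | rewrite exprS; apply: subringM].
Qed.

End SubringClosure.

Lemma bigcap_subring (I : Type) (P : I -> Prop) (F : I -> S -> Prop) :
  (forall i, P i -> is_subring (F i)) -> is_subring (fun x => forall i, P i -> F i x).
Proof.
move=> sF; split=> [i /sF /subring1 // | x y Fx Fy i Pi | x y Fx Fy i Pi].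
  by apply: (subringB (sF i Pi)); [apply: Fx | apply: Fy].
by apply: (subringM (sF i Pi)); [apply: Fx | apply: Fy].
Qed.

Lemma capR_subring X Y : is_subring X -> is_subring Y -> is_subring (capR X Y).
Proof.
move=> sX sY; split=> [|x y [Xx Yx] [Xy Yy] | x y [Xx Yx] [Xy Yy]]; split;
  by [apply: subring1 | apply: subringB | apply: subringM].
Qed.

Lemma gen_sub X : subS X (gen X). Proof. by move=> x Xx D _; apply. Qed.
Lemma gen_min X D : is_subring D -> subS X D -> subS (gen X) D. Proof. by move=> sD XD x; apply. Qed.

Lemma gen_subring X : is_subring (gen X).
Proof.
split=> [D sD _ | x y gx gy D sD XD | x y gx gy D sD XD]; first exact: subring1.
  by apply: (subringB sD); [apply: gx | apply: gy].
by apply: (subringM sD); [apply: gx | apply: gy].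
Qed.

Lemma genS X Y : subS X Y -> subS (gen X) (gen Y).
Proof. by move=> XY; apply: gen_min (@gen_subring _) _ => x /XY /gen_sub. Qed.

Lemma prodR_subring X Y : is_subring (prodR X Y). Proof. exact: gen_subring. Qed.
Lemma prodRl X Y : subS X (prodR X Y). Proof. by move=> x Xx; apply: gen_sub; left. Qed.
Lemma prodRr X Y : subS Y (prodR X Y). Proof. by move=> x Yx; apply: gen_sub; right. Qed.

Lemma prodR_min X Y D : is_subring D -> subS X D -> subS Y D -> subS (prodR X Y) D.
Proof. by move=> sD XD YD; apply: gen_min => // x [/XD | /YD]. Qed.

Lemma prodRS X Y X' Y' : subS X X' -> subS Y Y' -> subS (prodR X Y) (prodR X' Y').
Proof. by move=> XX' YY'; apply: genS => x [/XX' | /YY']; [left | right]. Qed.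

Lemma prodRC X Y : prodR X Y = prodR Y X.
Proof. by rewrite /prodR; congr gen; apply/funext => x; apply/propext/or_comm. Qed.

Lemma prodR_sub_idr X Y : is_subring Y -> subS X Y -> prodR X Y = Y.
Proof. by move=> sY XY; apply: subS_anti; [apply: prodR_min | apply: prodRr]. Qed.

Lemma capRC X Y : capR X Y = capR Y X.
Proof. by apply/funext => x; apply/propext; rewrite /capR; split=> -[]. Qed.

Lemma capR_sub_idr X Y : subS Y X -> capR X Y = Y.
Proof. by move=> YX; apply: subS_anti => [x [] | x Yx] //; split => //; apply: YX. Qed.

Lemma cap_fullR X : capR full X = X. Proof. exact: capR_sub_idr. Qed.

Lemma capR_in_interval A C T : is_subring C -> is_subring T -> subS A C -> subS A T ->
  in_interval A T (capR C T).
Proof.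
by move=> sC sT AC AT; split=> [|x Ax | x []] //; [apply: capR_subring | split; auto].
Qed.

(** * Socles and Loewy series of a split interval *)

Lemma socle_sub A B : subS A (socle A B). Proof. by move=> x Ax; apply: gen_sub; left. Qed.

Lemma atom_sub_socle A B C : atom A B C -> subS C (socle A B).
Proof. by move=> atC x Cx; apply: gen_sub; right; exists C. Qed.

Lemma socle_in_interval R B A : is_subring B -> in_interval R B A -> in_interval R B (socle A B).
Proof.
move=> sB [sA RA AB]; split=> [|x /RA /socle_sub //|]; first exact: gen_subring.
by apply: gen_min => // x [/AB // | [C [[[_ _ CB] _] /CB]]].
Qed.

Lemma socle_id B : is_subring B -> socle B B = B.
Proof.
move=> sB; apply: subS_anti; last exact: socle_sub.
apply: gen_min => // x [// | [C [[[_ BC CB] [_ _ _ nBC _]] _]]].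
by case: nBC; apply: subS_anti.
Qed.

Lemma loewy_in_interval R B i : is_subring R -> is_subring B -> subS R B ->
  in_interval R B (loewy R B i).
Proof. by move=> sR sB RB; elim: i => [|i IH] /=; [split | apply: socle_in_interval]. Qed.

Lemma loewy_stable {A B k j} : is_subring B -> loewy A B k = B -> (k <= j)%N -> loewy A B j = B.
Proof.
move=> sB ek; elim: j => [|j IH]; first by rewrite leqn0 => /eqP <-.
by rewrite leq_eqVlt ltnS => /orP [/eqP <- // | /IH /= ->]; apply: socle_id.
Qed.

Lemma loewy_length_exists {A B k} : loewy A B k = B -> exists m, loewy_length A B m.
Proof.
move=> ek; have ex : exists k, `[< loewy A B k = B >] by exists k; apply/asboolP.
by exists (ex_minn ex); case: ex_minnP => m /asboolP em mmin; split=> // j /asboolP /mmin.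
Qed.

Record interval_split R T U : Prop := IntervalSplit {
  split_subring : is_subring R;
  split_T : in_interval R full T;
  split_U : in_interval R full U;
  split_eq : forall C, in_interval R full C -> C = prodR (capR C T) (capR C U);
  split_capl : forall X Y, in_interval R T X -> in_interval R U Y -> capR (prodR X Y) T = X;
  split_capr : forall X Y, in_interval R T X -> in_interval R U Y -> capR (prodR X Y) U = Y }.

Lemma interval_splitC R T U : interval_split R T U -> interval_split R U T.
Proof.
case=> sR iT iU eqC capl capr; split=> // [C /eqC | X Y iX iY | X Y iX iY]; rewrite prodRC //.
  exact: capr.
exact: capl.
Qed.

Section AtomsOfSplitInterval.
Variables R T U : S -> Prop.
Hypothesis sp : interval_split R T U.

Lemma atom_capR X Y C : in_interval R T X -> in_interval R U Y ->
  atom (prodR X Y) full C -> capR C T = X \/ atom X T (capR C T).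
Proof.
move=> iX iY [[sC XYC _] [_ _ _ _ minC]].
have [[sT _ _] [sU RU _]] := (split_T sp, split_U sp).
have [[sX RX XT] [_ _ YU]] := (iX, iY).
have XC : subS X C by move=> x /prodRl /XYC.
have iCU : in_interval R U (capR C U).
  by apply: capR_in_interval => // x /RX /XC.
have [eCT | neCT] := pselect (capR C T = X); [by left | right].
have iCT : in_interval X T (capR C T) by apply: capR_in_interval.
split=> //; split=> //; [exact: capR_subring | by case: iCT | by move=> /esym |].
move=> D [sD XD DCT].
have iD : in_interval R T D by split=> [|x /RX /XD|x /DCT []].
have iDCU : in_interval (prodR X Y) C (prodR D (capR C U)).
  split; first exact: prodR_subring.
    by apply: prodRS => // y Yy; split; [apply: XYC; apply: prodRr | apply: YU].
  by apply: prodR_min => // x; [move/DCT => [] | case].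
have := split_capl sp iD iCU.
by case: (minC _ iDCU) => ->; [rewrite (split_capl sp iX iY); left | right].
Qed.

Lemma atom_prodR X Y E : in_interval R T X -> in_interval R U Y ->
  atom X T E -> atom (prodR X Y) full (prodR E Y).
Proof.
move=> iX iY [[sE XE ET] [_ _ _ nXE minE]].
have [sT _ _] := split_T sp.
have [[_ RX XT] [_ _ YU]] := (iX, iY).
have iE : in_interval R T E by split=> // x /RX /XE.
have XYEY : subS (prodR X Y) (prodR E Y) by apply: prodRS.
split; first by split=> //; apply: prodR_subring.
split=> //; try exact: prodR_subring.
  by move=> e; apply: nXE; rewrite -(split_capl sp iX iY) e (split_capl sp iE iY).
move=> D [sD XYD DEY].
have iD : in_interval R full D by split=> // x /RX /prodRl /XYD.
have DU : capR D U = Y.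
  apply: subS_anti => [x [Dx Ux] | y Yy]; last by split; [apply: XYD; apply: prodRr | apply: YU].
  by rewrite -(split_capr sp iE iY); split=> //; apply: DEY.
have iDT : in_interval X E (capR D T).
  split; [exact: capR_subring | by move=> x Xx; split; [apply: XYD; apply: prodRl | apply: XT] |].
  by move=> x [Dx Tx]; rewrite -(split_capl sp iE iY); split=> //; apply: DEY.
by rewrite (split_eq sp iD) DU; case: (minE _ iDT) => ->; [left | right].
Qed.

Lemma capR_atom_sub_socle X Y C : in_interval R T X -> in_interval R U Y ->
  atom (prodR X Y) full C -> subS (capR C T) (socle X T).
Proof.
by move=> iX iY /(atom_capR iX iY) [-> | /atom_sub_socle //]; apply: socle_sub.
Qed.

Lemma socle_sub_socle_prodR X Y : in_interval R T X -> in_interval R U Y ->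
  subS (socle X T) (socle (prodR X Y) full).
Proof.
move=> iX iY; apply: gen_min; first exact: gen_subring.
move=> x [/prodRl /socle_sub // | [E [atE Ex]]].
by apply: (atom_sub_socle (atom_prodR iX iY atE)); apply: prodRl.
Qed.

End AtomsOfSplitInterval.

Lemma socle_prodR R T U X Y : interval_split R T U -> in_interval R T X -> in_interval R U Y ->
  socle (prodR X Y) full = prodR (socle X T) (socle Y U).
Proof.
move=> sp iX iY; have spC := interval_splitC sp.
apply: subS_anti; last first.
  apply: prodR_min; first exact: gen_subring.
    exact: (socle_sub_socle_prodR sp iX iY).
  by rewrite prodRC; exact: (socle_sub_socle_prodR spC iY iX).
apply: gen_min; first exact: prodR_subring.
move=> x [XYx | [C [atC Cx]]]; first by apply: prodRS XYx; apply: socle_sub.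
have iC : in_interval R full C.
  have [[sC XYC _] _] := atC; have [_ RX _] := iX.
  by split=> // y /RX /prodRl /XYC.
move: Cx; rewrite (split_eq sp iC); apply: prodRS; first exact: (capR_atom_sub_socle sp iX iY atC).
by rewrite prodRC in atC; exact: (capR_atom_sub_socle spC iY iX atC).
Qed.

Section SplitConsequences.
Variables R T U : S -> Prop.
Hypothesis sp : interval_split R T U.

Let sR : is_subring R := split_subring sp.
Let iT : in_interval R full T := split_T sp.
Let iU : in_interval R full U := split_U sp.

Lemma loewy_prodR i : loewy R full i = prodR (loewy R T i) (loewy R U i).
Proof.
have [[sT RT _] [sU RU _]] := (iT, iU).
elim: i => [|i IH] /=; first by rewrite prodR_sub_idr.
by rewrite IH (socle_prodR sp) //; apply: loewy_in_interval.
Qed.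

Lemma split_capR : capR T U = R.
Proof.
have [[_ RT _] [sU RU _]] := (iT, iU).
by rewrite capRC -{1}(prodR_sub_idr sU RU) (split_capl sp) //; split.
Qed.

Lemma split_prodR : prodR T U = full.
Proof.
have iS : in_interval R full full by split.
by rewrite [RHS](split_eq sp iS) !cap_fullR.
Qed.

Lemma loewy_split_full {i} : loewy R full i = full -> loewy R T i = T.
Proof.
have [[sT RT _] [sU RU _]] := (iT, iU).
move=> Si; have := split_capl sp (loewy_in_interval i sR sT RT) (loewy_in_interval i sR sU RU).
by rewrite -loewy_prodR Si cap_fullR.
Qed.

Lemma split_complement_unique U' : in_interval R full U' ->
  capR T U' = R -> prodR T U' = full -> U' = U.
Proof.
move=> iU' capTU' prodTU'.
have [[sT RT _] [sU RU _]] := (iT, iU); have [sU' RU' _] := iU'.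
have iU'U : in_interval R U U'.
  split=> // x; rewrite (split_eq sp iU') capRC capTU'.
  by apply: prodR_min => // y [].
have iTT : in_interval R T T by split.
by rewrite -(split_capr sp iTT iU'U) prodTU' cap_fullR.
Qed.

End SplitConsequences.

Lemma split_loewy_length R T U n : interval_split R T U -> loewy_length R full n ->
  exists m r, [/\ loewy_length R T m, loewy_length R U r & n = maxn m r].
Proof.
move=> sp [Sn nmin]; have spC := interval_splitC sp.
have [[sT _ _] [sU _ _]] := (split_T sp, split_U sp).
have [Tn Un] := (loewy_split_full sp Sn, loewy_split_full spC Sn).
have [m [Tm mmin]] := loewy_length_exists Tn.
have [r [Ur rmin]] := loewy_length_exists Un.
exists m, r; split=> //; apply/eqP; rewrite eqn_leq geq_max (mmin _ Tn) (rmin _ Un) !andbT.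
apply: nmin; rewrite (loewy_prodR sp) (loewy_stable sT Tm (leq_maxl m r)).
by rewrite (loewy_stable sU Ur (leq_maxr m r)) (split_prodR sp).
Qed.

(** * Ideals and prime ideals *)

Definition ideal_of R I :=
  [/\ subS I R, I 0, (forall x y, I x -> I y -> I (x - y)) &
      (forall a x, R a -> I x -> I (a * x))].

Definition proper_ideal R I := ideal_of R I /\ ~ I 1.

Definition ideal_sum I J : S -> Prop := fun x => exists u v, [/\ I u, J v & x = u + v].

Definition comaximal I J := ideal_sum I J 1.

Definition principal R c : S -> Prop := fun x => exists r, R r /\ x = r * c.

Definition conductor R A B : S -> Prop := fun s => R s /\ forall x, B x -> A (s * x).

Section Ideals.
Variable R : S -> Prop.
Hypothesis sR : is_subring R.

Lemma idealD I x y : ideal_of R I -> I x -> I y -> I (x + y).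
Proof.
case=> _ I0 IB _ Ix Iy; rewrite -[y]opprK; apply: (IB) => //.
by rewrite -sub0r; apply: IB.
Qed.

Lemma ideal_sum_ideal I J : ideal_of R I -> ideal_of R J -> ideal_of R (ideal_sum I J).
Proof.
move=> iI iJ; have [[IR I0 IB IM] [JR J0 JB JM]] := (iI, iJ).
split=> [_ [u [v [Iu Jv ->]]] | | _ _ [u [v [Iu Jv ->]]] [u' [v' [Iu' Jv' ->]]] |
         a _ Ra [u [v [Iu Jv ->]]]].
- by apply: (subringD sR); [apply: IR | apply: JR].
- by exists 0, 0; rewrite addr0.
- by exists (u - u'), (v - v'); split; [apply: IB | apply: JB | rewrite opprD addrACA].
- by exists (a * u), (a * v); split; [apply: IM | apply: JM | rewrite mulrDr].
Qed.

Lemma ideal_suml I J : ideal_of R J -> subS I (ideal_sum I J).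
Proof. by case=> _ J0 _ _ u Iu; exists u, 0; rewrite addr0. Qed.

Lemma ideal_sumr I J : ideal_of R I -> subS J (ideal_sum I J).
Proof. by case=> _ I0 _ _ v Jv; exists 0, v; rewrite add0r. Qed.

Lemma principal_ideal c : R c -> ideal_of R (principal R c).
Proof.
move=> Rc; split=> [_ [r [Rr ->]] | | _ _ [r [Rr ->]] [r' [Rr' ->]] | a _ Ra [r [Rr ->]]].
- exact: subringM.
- by exists 0; rewrite mul0r; split=> //; apply: subring0.
- by exists (r - r'); rewrite mulrBl; split=> //; apply: subringB.
- by exists (a * r); rewrite mulrA; split=> //; apply: subringM.
Qed.

Lemma conductor_ideal A B : is_subring A -> subS R A -> ideal_of R (conductor R A B).
Proof.
move=> sA RA; split=> [s [] // | | s t [Rs As] [Rt At] | a s Ra [Rs As]].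
- by split=> [|x _]; rewrite ?mul0r; apply: subring0.
- by split=> [|x Bx]; rewrite ?mulrBl; apply: subringB => //; [apply: As | apply: At].
- by split=> [|x Bx]; rewrite -?mulrA; apply: subringM => //; [apply: RA | apply: As].
Qed.

Lemma maximal_ideal_prime A : proper_ideal R A ->
  (forall B, A `<` B -> ~ proper_ideal R B) -> prime_ideal_of R A.
Proof.
move=> [iA nA1] Amax; have [AR A0 AB AM] := iA.
split=> //; split=> // a b Ra Rb Aab; apply: contrapT => /not_orP [nAa nAb].
have comax c : R c -> ~ A c -> comaximal A (principal R c).
  move=> Rc nAc; apply: contrapT => nc; apply: (Amax (ideal_sum A (principal R c))).
    split; first exact: ideal_suml (principal_ideal Rc).
    move=> /(_ c) cA; apply/nAc/cA; exists 0, c; split=> //; last by rewrite add0r.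
    by exists 1; rewrite mul1r; split=> //; apply: subring1.
  by split=> //; apply: ideal_sum_ideal => //; apply: principal_ideal.
have [p [_ [Ap [r [Rr ->]] e1]]] := comax _ Ra nAa.
have [q [_ [Aq [s [Rs ->]] e2]]] := comax _ Rb nAb.
apply: nA1; rewrite -[1]mulr1 {1}e1 e2.
have -> : (p + r * a) * (q + s * b) = (q + s * b) * p + (r * a) * q + (r * s) * (a * b) by ring.
apply: idealD => //; first apply: idealD => //.
- by apply: AM => //; apply: subringD => //; [apply: AR | apply: subringM].
- by apply: AM => //; apply: subringM.
- by apply: AM => //; apply: subringM.
Qed.

End Ideals.

Section PrimeIdealOverProperIdeal.
Variables R N : S -> Prop.
Hypotheses (sR : is_subring R) (pN : proper_ideal R N).

(* [set0] is allowed so that the union of the empty chain is a candidate too. *)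
Let candidate I := I = set0 \/ (proper_ideal R I /\ subS N I).

Let chain_bigcup_candidate F : F `<=` candidate -> total_on F subset ->
  candidate (\bigcup_(I in F) I).
Proof.
move=> Fc Ftot.
have proper_of I x : F I -> I x -> proper_ideal R I /\ subS N I.
  by move=> FI Ix; case: (Fc _ FI) => // I0; rewrite I0 in Ix.
have [[I0 FI0 [x I0x]] | Fnil] := pselect (exists2 I, F I & exists x, I x); last first.
  by left; apply/seteqP; split=> // x [I FI Ix]; apply: Fnil; exists I => //; exists x.
right; have [_ NI0] := proper_of _ _ FI0 I0x.
split; last by move=> y Ny; exists I0 => //; apply: NI0.
split; last by case=> I FI I1; have [[_ nI1] _] := proper_of _ _ FI I1.
split=> [y [I FI Iy] | | y z [I FI Iy] [J FJ Jz] | a y Ra [I FI Iy]].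
- by have [[[IR _ _ _] _] _] := proper_of _ _ FI Iy; apply: IR.
- by have [[[_ I00 _ _] _] _] := proper_of _ _ FI0 I0x; exists I0.
- have [IJ | JI] := Ftot _ _ FI FJ.
    by exists J => //; have [[[_ _ JB _] _] _] := proper_of _ _ FJ Jz; apply: JB => //; apply: IJ.
  by exists I => //; have [[[_ _ IB _] _] _] := proper_of _ _ FI Iy; apply: IB => //; apply: JI.
- by exists I => //; have [[[_ _ _ IM] _] _] := proper_of _ _ FI Iy; apply: IM.
Qed.

Lemma exists_prime_ideal_over : exists P, prime_ideal_of R P /\ subS N P.
Proof.
have [A [cA Amax]] := Zorn_bigcup chain_bigcup_candidate.
have cN : candidate N by right; split.
have [iN _] := pN.
have [A0 | [pA NA]] := cA.
  exfalso; apply: (Amax N _ cN); rewrite A0; split=> // /(_ 0).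
  by case: iN => _ N0 _ _ /(_ N0).
exists A; split=> //; apply: maximal_ideal_prime => // B AB pB.
by apply: (Amax B AB); right; split=> // x /NA /(proj1 AB).
Qed.

End PrimeIdealOverProperIdeal.

(** * Comaximal conductors *)

Definition conductors_comax R X w z :=
  comaximal (conductor R X [set w]) (conductor R X [set z]).

Section Conductors.
Variable R : S -> Prop.
Hypothesis sR : is_subring R.

Lemma conductors_comax_sym X w z : conductors_comax R X w z -> conductors_comax R X z w.
Proof. by case=> a [b [Ca Cb e]]; exists b, a; rewrite addrC. Qed.

Lemma conductors_comaxS X X' w z : subS X X' ->
  conductors_comax R X w z -> conductors_comax R X' w z.
Proof.
move=> XX' [a [b [[Ra aw] [Rb bz] e]]].
by exists a, b; split=> //; [split=> // x /aw /XX' | split=> // x /bz /XX'].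
Qed.

Lemma conductors_comaxl X w z : is_subring X -> X w -> conductors_comax R X w z.
Proof.
move=> sX Xw; exists 1, 0; split; last by rewrite addr0.
  by split=> [|_ ->]; rewrite ?mul1r //; apply: subring1.
by split=> [|_ ->]; rewrite ?mul0r; [apply: subring0 | apply: subring0].
Qed.

Lemma conductors_comax_diag X z : is_subring X -> conductors_comax R X z z -> X z.
Proof.
move=> sX [a [b [[_ az] [_ bz] e]]].
by rewrite -[z]mul1r e mulrDl; apply: (subringD sX); [apply: az | apply: bz].
Qed.

Lemma conductors_comax_subring X z : is_subring X -> subS R X ->
  is_subring (conductors_comax R X ^~ z).
Proof.
move=> sX RX.
have closed (op : S -> S -> S) :
    (forall a1 a2 w1 w2, R a1 -> R a2 -> X (a1 * w1) -> X (a2 * w2) ->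
       X (a1 * a2 * op w1 w2)) ->
    forall w1 w2, conductors_comax R X w1 z -> conductors_comax R X w2 z ->
      conductors_comax R X (op w1 w2) z.
  move=> opX w1 w2 [a1 [b1 [[Ra1 aw1] [Rb1 bz1] e1]]] [a2 [b2 [[Ra2 aw2] [Rb2 bz2] e2]]].
  exists (a1 * a2), (b1 + a1 * b2); split; last by rewrite addrCA -mulrDr -e2 mulr1 addrC.
    split=> [|_ ->]; first exact: subringM.
    by apply: opX => //; [apply: aw1 | apply: aw2].
  split=> [|_ ->]; first by apply: subringD => //; apply: subringM.
  rewrite mulrDl -mulrA; apply: subringD => //; first exact: bz1.
  by apply: (subringM sX); [apply: RX | apply: bz2].
split; first by apply: conductors_comaxl => //; apply: subring1.
  apply: closed => a1 a2 w1 w2 Ra1 Ra2 Xw1 Xw2.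
  have -> : a1 * a2 * (w1 - w2) = a2 * (a1 * w1) - a1 * (a2 * w2) by ring.
  by apply: subringB => //; apply: subringM => //; apply: RX.
apply: closed => a1 a2 w1 w2 Ra1 Ra2 Xw1 Xw2.
have -> : a1 * a2 * (w1 * w2) = (a1 * w1) * (a2 * w2) by ring.
exact: subringM.
Qed.

Lemma prodR_conductors_comax X Y z : is_subring X -> subS R X ->
  (forall w, Y w -> conductors_comax R X w z) -> prodR X Y z -> X z.
Proof.
move=> sX RX YXz XYz; apply: conductors_comax_diag => //.
apply: (prodR_min (conductors_comax_subring z sX RX) _ YXz XYz) => w Xw.
exact: conductors_comaxl.
Qed.

Lemma common_denominator P (ys : seq S) : prime_ideal_of R P ->
  (forall y, y \in ys -> exists s, [/\ R s, ~ P s & R (s * y)]) ->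
  exists s, conductor R R [set y | y \in ys] s /\ ~ P s.
Proof.
case=> _ _ _ _ [nP1 Pprime]; elim: ys => [|y ys IH] den.
  by exists 1; split=> //; split=> [|z /=]; [apply: subring1 | rewrite in_nil].
have [s1 [Rs1 nPs1 Rs1y]] := den y (mem_head y ys).
have [s2 [[Rs2 Rs2ys] nPs2]] : exists s, conductor R R [set y | y \in ys] s /\ ~ P s.
  by apply: IH => z zys; apply: den; rewrite inE zys orbT.
exists (s1 * s2); split; last by move=> /(Pprime _ _ Rs1 Rs2) [].
split=> [|z /=]; first exact: subringM.
rewrite inE => /orP [/eqP -> | zys]; first by rewrite mulrAC; apply: subringM.
by rewrite -mulrA; apply: subringM => //; apply: Rs2ys.
Qed.

End Conductors.

(** * Finite generation under FCP *)

Lemma FCP_chain_stalls A B (G : nat -> S -> Prop) : FCP A B ->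
  (forall k, in_interval A B (G k)) -> (forall k, subS (G k) (G k.+1)) ->
  exists k, subS (G k.+1) (G k).
Proof.
move=> fcp iG Gincr; apply: contrapT => /forallNP Gstrict.
have Gmono k k' : (k <= k')%N -> subS (G k) (G k').
  elim: k' => [|k' IH]; first by rewrite leqn0 => /eqP ->.
  by rewrite leq_eqVlt ltnS => /orP [/eqP -> // | /IH kk' x /kk' /Gincr].
have Ginj k k' : (k < k')%N -> G k <> G k'.
  by move=> kk' Gkk'; apply: (Gstrict k) => x /(Gmono _ _ kk'); rewrite Gkk'.
have [l Gl] : exists l, forall C, (exists k, C = G k) -> List.In C l.
  apply: fcp => [_ [k ->] // | _ _ [k ->] [k' ->]].
  by case: (leqP k k') => kk'; [left | right]; apply: Gmono => //; apply: ltnW.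
have nodup : List.NoDup (List.map G (List.seq 0 (size l).+1)).
  apply: List.NoDup_map_NoDup_ForallPairs (List.seq_NoDup _ _) => k k' _ _ Gkk'.
  by case: (ltngtP k k') => // kk'; case: (Ginj _ _ kk').
have := List.NoDup_incl_length nodup.
rewrite List.length_map List.length_seq => /(_ l) len.
have /len : List.incl (List.map G (List.seq 0 (size l).+1)) l.
  by move=> C /List.in_map_iff [k [<- _]]; apply: Gl; exists k.
by move/leP; rewrite ltnn.
Qed.

Definition adjoin R (ys : seq S) : S -> Prop := gen (fun z => R z \/ z \in ys).

Lemma FCP_fingen R T : FCP R full ->
  exists ys, (forall y, y \in ys -> T y) /\ subS T (adjoin R ys).
Proof.
move=> fcp; apply: contrapT => /forallNP nofg.
pose fresh ys z := (forall y, y \in ys -> T y) -> T z /\ ~ adjoin R ys z.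
have [next nextP] : {next & forall ys, fresh ys (next ys)}.
  apply: (@choice _ _ fresh) => ys; rewrite /fresh.
  have [Tys | nTys] := pselect (forall y, y \in ys -> T y); last by exists 0.
  have /existsNP [z /not_implyP [Tz nz]] : ~ subS T (adjoin R ys) by move=> TG; apply: (nofg ys).
  by exists z.
pose fix gs k := if k is k'.+1 then next (gs k') :: gs k' else [::].
have gsT k y : y \in gs k -> T y.
  elim: k y => [|k IH] y //=; rewrite inE => /orP [/eqP -> | /IH //].
  exact: (nextP _ IH).1.
have [k stall] : exists k, subS (adjoin R (gs k.+1)) (adjoin R (gs k)).
  apply: (FCP_chain_stalls _ fcp) => k.
    by split=> [|x Rx|] //; [apply: gen_subring | apply: gen_sub; left].
  by apply: genS => x [Rx | xgs]; [left | right; rewrite inE xgs orbT].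
apply: (nextP _ (gsT k)).2; apply: stall; apply: gen_sub; right; exact: mem_head.
Qed.

(** * The complement of T *)

Definition complement R T : S -> Prop :=
  fun w => forall z, T z -> conductors_comax R R w z.

Section Complement.
Variables R T : S -> Prop.
Hypotheses (sR : is_subring R) (iT : in_interval R full T).

Lemma complement_in_interval : in_interval R full (complement R T).
Proof.
split=> // [|w Rw z _]; last exact: conductors_comaxl.
by apply: bigcap_subring => z _; apply: conductors_comax_subring.
Qed.

Lemma capR_prodR_complementl X Y : in_interval R T X -> in_interval R (complement R T) Y ->
  capR (prodR X Y) T = X.
Proof.
move=> [sX RX XT] [_ _ YU]; apply: subS_anti => [z [XYz Tz] | z Xz].
  apply: (prodR_conductors_comax sR sX RX _ XYz) => w /YU /(_ z Tz).
  exact: conductors_comaxS.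
by split; [apply: prodRl | apply: XT].
Qed.

Lemma capR_prodR_complementr X Y : in_interval R T X -> in_interval R (complement R T) Y ->
  capR (prodR X Y) (complement R T) = Y.
Proof.
move=> [_ _ XT] [sY RY YU]; apply: subS_anti => [z [XYz Uz] | z Yz].
  rewrite prodRC in XYz; apply: (prodR_conductors_comax sR sY RY _ XYz) => w /XT /Uz.
  by move=> /conductors_comax_sym; apply: conductors_comaxS.
by split; [apply: prodRr | apply: YU].
Qed.

Lemma comaximal_pow u m : R u -> R m -> 1 = u + m ->
  forall K, exists al, R al /\ 1 = u * al + m ^+ K.
Proof.
move=> Ru Rm e; elim=> [|K [al [Ral eK]]].
  by exists 0; rewrite mulr0 add0r expr0; split=> //; apply: subring0.
exists (1 + m * al); split; first by apply: (subringD sR); [apply: subring1 | apply: subringM].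
by rewrite exprS mulrDr mulr1 mulrCA -addrA -mulrDr -eK mulr1.
Qed.

Variable ys : seq S.
Hypotheses (ysT : forall y, y \in ys -> T y) (Tys : subS T (adjoin R ys)).
Hypothesis disjoint_supp : forall P, ~ (in_supp R R T P /\ in_supp R T full P).

Lemma conductor_adjoin_pow m z : conductor R R [set y | y \in ys] m -> T z ->
  exists K, R (m ^+ K * z).
Proof.
move=> [Rm mys] /Tys; pose Z z := exists K, R (m ^+ K * z).
have sZ : is_subring Z.
  split=> [|x y [K Rx] [K' Ry] | x y [K Rx] [K' Ry]].
  - by exists 0%N; rewrite mul1r; apply: subring1.
  - exists (K + K')%N.
    have -> : m ^+ (K + K') * (x - y) = m ^+ K' * (m ^+ K * x) - m ^+ K * (m ^+ K' * y).
      by rewrite exprD; ring.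
    by apply: (subringB sR); apply: (subringM sR) => //; apply: subringX.
  - exists (K + K')%N.
    have -> : m ^+ (K + K') * (x * y) = (m ^+ K * x) * (m ^+ K' * y) by rewrite exprD; ring.
    exact: (subringM sR).
apply: (gen_min sZ) => w [Rw | wys]; first by exists 0%N; rewrite expr0 mul1r.
by exists 1%N; rewrite expr1; apply: mys.
Qed.

Lemma disjoint_supp_comaximal x :
  comaximal (conductor R T [set x]) (conductor R R [set y | y \in ys]).
Proof.
have [sT RT _] := iT.
apply: contrapT => ncomax.
have iI := conductor_ideal sR [set x] sT RT.
have iJ := conductor_ideal sR [set y | y \in ys] sR (fun _ => id).
have [P [pP IJP]] := exists_prime_ideal_over sR (conj (ideal_sum_ideal sR iI iJ) ncomax).
case: (@disjoint_supp P); split; split=> //; last first.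
  exists x; split=> // s Rs nPs Tsx; apply/nPs/IJP/(ideal_suml _ iJ).
  by split=> // _ ->.
apply: contrapT => nsupp.
have den y : y \in ys -> exists s, [/\ R s, ~ P s & R (s * y)].
  move=> yys; apply: contrapT => nden; apply: nsupp; exists y; split; first exact: ysT.
  by move=> s Rs nPs Rsy; apply: nden; exists s.
have [s [Js nPs]] := common_denominator sR ys pP den.
exact/nPs/IJP/(ideal_sumr _ iI).
Qed.

Lemma complement_decompose C : in_interval R full C ->
  subS C (prodR (capR C T) (capR C (complement R T))).
Proof.
move=> [sC RC _] x Cx; have [sT RT _] := iT.
have [u [m [[Ru uxT] Jm e]]] := disjoint_supp_comaximal x.
have Tux : T (u * x) by apply: uxT.
have [Rm _] := Jm.
have [K Rmux] := conductor_adjoin_pow Jm Tux.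
have [al [Ral eal]] := comaximal_pow Ru Rm e K.
have -> : x = al * (u * x) + m ^+ K * x by rewrite mulrA (mulrC al) -mulrDl -eal mul1r.
apply: (subringD (prodR_subring _ _)).
  apply: prodRl; split; last by apply: (subringM sT) => //; apply: RT.
  by apply: (subringM sC); [apply: RC | apply: (subringM sC) => //; apply: RC].
apply: prodRr; split; first by apply: (subringM sC) => //; apply: RC; apply: subringX.
move=> z Tz; have [K' Rmz] := conductor_adjoin_pow Jm Tz.
have [be [Rbe ebe]] := comaximal_pow Ru Rm e K'.
exists (u * be), (m ^+ K'); split=> //; split=> [|_ ->].
- exact: subringM.
- have -> : u * be * (m ^+ K * x) = be * (m ^+ K * (u * x)) by ring.
  exact: subringM.
- exact: subringX.
- exact: Rmz.
Qed.

Lemma complement_split : interval_split R T (complement R T).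
Proof.
split=> //.
- exact: complement_in_interval.
- move=> C iC; apply: subS_anti; first exact: complement_decompose.
  by have [sC _ _] := iC; apply: prodR_min => // x [].
- exact: capR_prodR_complementl.
- exact: capR_prodR_complementr.
Qed.

End Complement.

End LoewySplitting.

Theorem proposition8p12 (S : comNzRingType) (R T : S -> Prop) (n : nat) :
  is_subring R ->
  FCP R (@fullS S) ->
  loewy_length R (@fullS S) n ->
  in_interval R (@fullS S) T -> T <> R -> T <> @fullS S ->
  (forall P, ~ (in_supp R R T P /\ in_supp R T (@fullS S) P)) ->
  exists U : S -> Prop,
    [/\ (in_interval R (@fullS S) U /\ capR T U = R /\ prodR T U = @fullS S),
        (forall U', in_interval R (@fullS S) U' ->
            capR T U' = R -> prodR T U' = @fullS S -> U' = U),
        (forall i, (i <= n)%N ->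
            loewy R (@fullS S) i = prodR (loewy R T i) (loewy R U i)) &
        (exists m r, [/\ loewy_length R T m, loewy_length R U r &
                         n = maxn m r])].
Proof.
move=> sR fcp len iT _ _ disjoint_supp.
have [ys [ysT Tys]] := FCP_fingen T fcp.
have sp := complement_split sR iT ysT Tys disjoint_supp.
exists (complement R T); split.
- by split; [exact: split_U sp | split; [exact: split_capR sp | exact: split_prodR sp]].
- exact: split_complement_unique sp.
- by move=> i _; exact: loewy_prodR sp i.
- exact: split_loewy_length sp len.
Qed.
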